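(* If $G$ is a finite simple chordless graph with $\Delta(G)\ge 3$, then any two proper $(\Delta(G)+1)$-edge-colorings of $G$ are $K$-equivalent.
   Context: A (proper) $t$-coloring of a graph $G$ is a map $\alpha:E(G)\to\{1,\dots,t\}$ such that adjacent edges receive different colors. For distinct colors $c,d$, $K_\alpha(c,d)$ denotes the subgraph of $G$ formed by the edges colored $c$ or $d$. A Kempe chain is a connected component of some $K_\alpha(c,d)$; a $K$-change consists of choosing a Kempe chain and swapping the two colors on its edges. Two $t$-colorings are $K$-equivalent if one can be obtained from the other by a finite sequence of $K$-changes, all using colors from $\{1,\dots,t\}$. A graph is chordless if no cycle $C$ of $G$ has a chord, i.e. an edge of $G$ joining two non-consecutive vertices of $C$. $\Delta(G)$ is the maximum degree. *)

From Stdlib Require Import Relation_Operators.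
From mathcomp Require Import all_boot.
Set Implicit Arguments. Unset Strict Implicit. Unset Printing Implicit Defensive.

Definition simple_graph (T : finType) (e : rel T) : Prop :=
  symmetric e /\ irreflexive e.

Definition edges (T : finType) (e : rel T) : {set {set T}} :=
  [set A : {set T} | [exists x, exists y, e x y && (A == [set x; y])]].

Definition maxdeg (T : finType) (e : rel T) : nat :=
  \max_(v : T) #|[set u | e v u]|.

(* chordless: no cycle (>= 3 distinct vertices, cyclically adjacent) has a
   chord, i.e. an edge joining two non-consecutive vertices of the cycle *)
Definition chordless (T : finType) (e : rel T) : Prop :=
  forall s : seq T, uniq s -> 3 <= size s -> cycle e s ->
  forall x y, x \in s -> y \in s -> e x y ->
    (y == next s x) || (x == next s y).

(* Edge colorings are maps from vertex pairs to colors (values on non-edges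
   are irrelevant). *)
Definition proper_coloring (T : finType) (e : rel T) (t : nat)
    (a : {set T} -> nat) : Prop :=
  (forall A, A \in edges e -> 1 <= a A <= t) /\
  (forall A B, A \in edges e -> B \in edges e -> A != B ->
     A :&: B != set0 -> a A != a B).

Definition Kedges (T : finType) (e : rel T) (a : {set T} -> nat) (c d : nat)
    : {set {set T}} :=
  [set A in edges e | (a A == c) || (a A == d)].

Definition Kadj (T : finType) (e : rel T) (a : {set T} -> nat) (c d : nat)
    : rel {set T} :=
  fun A B => [&& A \in Kedges e a c d, B \in Kedges e a c d & A :&: B != set0].

Definition kempe_chain (T : finType) (e : rel T) (a : {set T} -> nat)
    (c d : nat) (A0 : {set T}) : {set {set T}} :=
  [set B | connect (Kadj e a c d) A0 B].

(* b is obtained from a by one K-change with colors in {1..t}.  (Chains that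
   are isolated vertices have no edges; swapping them is the identity.) *)
Definition Kchange (T : finType) (e : rel T) (t : nat)
    (a b : {set T} -> nat) : Prop :=
  exists c d A0,
    [/\ 1 <= c <= t, 1 <= d <= t, c != d, A0 \in Kedges e a c d &
     forall A, A \in edges e ->
       b A = (if A \in kempe_chain e a c d A0 then
                (if a A == c then d else c)
              else a A)].

Definition same_on_edges (T : finType) (e : rel T) (a b : {set T} -> nat)
    : Prop := forall A, A \in edges e -> a A = b A.

Definition K_equivalent (T : finType) (e : rel T) (t : nat)
    (a b : {set T} -> nat) : Prop :=
  exists b', clos_refl_trans _ (Kchange e t) a b' /\ same_on_edges e b' b.

From Stdlib Require Import Relation_Operators.
From mathcomp Require Import all_boot zify.
Set Implicit Arguments. Unset Strict Implicit. Unset Printing Implicit Defensive.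

(* Edge colourings of G are vertex colourings of its line graph.  In a
   chordless graph every nonempty edge-subgraph has a vertex y of degree at most
   2: take y at the end of a maximal path, all of whose neighbours lie on the
   path; a third neighbour would make the second one a chord of the cycle closed
   by the last one.  An edge yz then meets at most Delta other edges, so the line
   graph is Delta-degenerate.

   In a k-degenerate graph any two proper (k+1)-colourings are Kempe equivalent:
   delete a vertex x of degree at most k, connect the two restricted colourings by
   induction and lift every Kempe change.  A chain avoiding x lifts unchanged.  If
   it reaches x, either some colour is missing around x, and x is first recoloured
   with it, or all k+1 colours but that of x occur on the at most k neighbours, so
   x has a single neighbour in the chain and the chain through x is swapped
   instead.  Finally x receives its target colour, which is free around it. *)

Section KempeChains.

Variables (V : finType) (r : rel V).
Hypothesis r_sym : symmetric r.

Implicit Types (E : {set V}) (a b : V -> nat) (c d t : nat) (u v w x : V).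

Definition bicoloured E a c d : {set V} := [set v in E | (a v == c) || (a v == d)].

Definition kempe_adj E a c d : rel V :=
  fun u v => [&& u \in bicoloured E a c d, v \in bicoloured E a c d & r u v].

Definition kchain E a c d v0 : {set V} := [set v | connect (kempe_adj E a c d) v0 v].

Definition kswap E a c d v0 : V -> nat :=
  fun v => if v \in kchain E a c d v0 then (if a v == c then d else c) else a v.

Definition kstep E t a b : Prop :=
  exists c d v0, [/\ 1 <= c <= t, 1 <= d <= t, c != d, v0 \in bicoloured E a c d &
    forall v, v \in E -> b v = kswap E a c d v0 v].

Definition proper_col E t a : Prop :=
  (forall v, v \in E -> 1 <= a v <= t) /\
  (forall v w, v \in E -> w \in E -> v != w -> r v w -> a v != a w).

Definition kequiv E t a b : Prop :=
  exists b', clos_refl_trans _ (kstep E t) a b' /\ {in E, b' =1 b}.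

Definition neighbours E x : {set V} := [set v in E | (v != x) && r x v].

Definition degenerate E0 k : Prop :=
  forall E, E \subset E0 -> E != set0 -> exists2 x, x \in E & #|neighbours E x| <= k.

Lemma kempe_adj_sym E a c d : symmetric (kempe_adj E a c d).
Proof. by move=> u v; rewrite /kempe_adj r_sym andbCA. Qed.

Lemma kchain_min E a c d v0 (S : {set V}) :
  v0 \in S -> (forall u v, kempe_adj E a c d u v -> u \in S -> v \in S) ->
  {subset kchain E a c d v0 <= S}.
Proof.
move=> Sv0 clS v; rewrite inE => v0v.
have symK := sym_connect_sym (kempe_adj_sym E a c d).
by rewrite -(closed_connect (intro_closed symK clS) v0v).
Qed.

Lemma kchain_trans E a c d v0 u v :
  u \in kchain E a c d v0 -> kempe_adj E a c d u v -> v \in kchain E a c d v0.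
Proof. by rewrite !inE => v0u uv; apply: connect_trans v0u (connect1 uv). Qed.

Lemma kchain_bicoloured E a c d v0 :
  v0 \in bicoloured E a c d -> {subset kchain E a c d v0 <= bicoloured E a c d}.
Proof. by move=> v0B; apply: kchain_min => // u v /and3P[]. Qed.

Lemma bicoloured_sym E a c d : bicoloured E a d c = bicoloured E a c d.
Proof. by apply/setP => v; rewrite !inE orbC. Qed.

Lemma kchain_sym E a c d v0 : kchain E a d c v0 = kchain E a c d v0.
Proof.
by apply/setP => v; rewrite !inE; apply: eq_connect => u w; rewrite /kempe_adj bicoloured_sym.
Qed.

Lemma kswap_sym E a c d v0 : c != d -> v0 \in bicoloured E a c d ->
  kswap E a d c v0 =1 kswap E a c d v0.
Proof.
move=> cd v0B v; rewrite /kswap kchain_sym; case: ifP => // /(kchain_bicoloured v0B).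
by rewrite inE => /andP[_ /orP[]/eqP->]; rewrite eqxx ?(negbTE cd) // eq_sym (negbTE cd).
Qed.

Lemma kstep_proper E t a b : proper_col E t a -> kstep E t a b -> proper_col E t b.
Proof.
move=> [a_rng a_prop] [c [d [v0 [ct dt cd v0B b_swap]]]].
have chB := kchain_bicoloured v0B.
have in_chain u v : u \in kchain E a c d v0 -> v \in E -> r u v ->
    (a v == c) || (a v == d) -> v \in kchain E a c d v0.
  move=> uC vE ruv avcd; apply: (kchain_trans uC).
  by rewrite /kempe_adj (chB _ uC) ruv inE vE avcd.
split=> [v vE|u v uE vE uv ruv]; rewrite !b_swap // /kswap.
  by case: ifP => _; [case: ifP | exact: a_rng].
have auv := a_prop u v uE vE uv ruv.
case: (boolP (u \in _)) => uC; case: (boolP (v \in _)) => vC.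
- move: (chB _ uC) (chB _ vC) auv; rewrite !inE.
  move=> /andP[_ /orP[]/eqP->] /andP[_ /orP[]/eqP->];
  by rewrite ?eqxx ?(eq_sym d c) ?(negbTE cd) // eq_sym.
- have : ~~ ((a v == c) || (a v == d)).
    by apply/negP => avcd; move/negP: vC; apply; exact: in_chain uC vE ruv avcd.
  by rewrite negb_or => /andP[avc avd]; case: ifP => _; rewrite eq_sym.
- have : ~~ ((a u == c) || (a u == d)).
    by apply/negP => aucd; move/negP: uC; apply; apply: in_chain vC uE _ aucd; rewrite r_sym.
  by rewrite negb_or => /andP[auc aud]; case: ifP.
- exact: auv.
Qed.

Lemma ksteps_proper E t a b :
  clos_refl_trans _ (kstep E t) a b -> proper_col E t a -> proper_col E t b.
Proof. by elim=> [u v /[swap] /kstep_proper|//|u v w _ IHuv _ IHvw /IHuv /IHvw]; apply. Qed.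

Lemma proper_col_sub E E' t a : E' \subset E -> proper_col E t a -> proper_col E' t a.
Proof.
move=> /subsetP sE [a_rng a_prop].
by split=> [v /sE|u v /sE uE /sE]; [exact: a_rng | exact: a_prop].
Qed.

Lemma bicoloured_del_neq E x a c d v : v \in bicoloured (E :\ x) a c d -> v != x.
Proof. by rewrite !inE => /andP[/andP[]]. Qed.

Section DeleteVertex.

Variables (E : {set V}) (x : V) (del gam : V -> nat) (c d : nat).
Hypothesis del_gam : {in E :\ x, del =1 gam}.

Lemma bicoloured_del v : v != x ->
  (v \in bicoloured E del c d) = (v \in bicoloured (E :\ x) gam c d).
Proof.
move=> vx; rewrite !inE vx /=; case vE: (v \in E) => //=.
by rewrite del_gam // !inE vx vE.
Qed.

Lemma kempe_adj_del u v : u != x -> v != x ->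
  kempe_adj E del c d u v = kempe_adj (E :\ x) gam c d u v.
Proof. by move=> ux vx; rewrite /kempe_adj !bicoloured_del. Qed.

Lemma connect_kempe_del :
  subrel (connect (kempe_adj (E :\ x) gam c d)) (connect (kempe_adj E del c d)).
Proof.
apply: connect_sub => u v uv; apply: connect1; move: (uv) => /and3P[uB vB _].
by rewrite kempe_adj_del // (bicoloured_del_neq uB, bicoloured_del_neq vB).
Qed.

Lemma kswap_del_avoid v0 : v0 \in bicoloured (E :\ x) gam c d ->
  (forall v, v \in kchain (E :\ x) gam c d v0 -> ~~ kempe_adj E del c d v x) ->
  v0 \in bicoloured E del c d /\
  {in E :\ x, kswap E del c d v0 =1 kswap (E :\ x) gam c d v0}.
Proof.
move=> v0B avoid; have v0x := bicoloured_del_neq v0B.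
split=> [|v vG]; first by rewrite bicoloured_del.
have vx : v != x by move: vG; rewrite !inE => /andP[].
suff eqC : (v \in kchain E del c d v0) = (v \in kchain (E :\ x) gam c d v0).
  by rewrite /kswap eqC del_gam.
apply/idP/idP; last by rewrite !inE; apply: connect_kempe_del.
apply: kchain_min => [|u w uw uC]; first by rewrite inE connect0.
have ux := bicoloured_del_neq (kchain_bicoloured v0B uC).
have wx : w != x by apply: contraNneq (avoid u uC) => <-.
by apply: kchain_trans uC _; rewrite -kempe_adj_del.
Qed.

Lemma kswap_del_through v0 w : x \in E -> del x = c ->
  v0 \in bicoloured (E :\ x) gam c d -> w \in kchain (E :\ x) gam c d v0 -> r x w ->
  (forall v, kempe_adj E del c d x v -> v = x \/ v = w) ->
  x \in bicoloured E del c d /\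
  {in E :\ x, kswap E del c d x =1 kswap (E :\ x) gam c d v0}.
Proof.
move=> xE delx v0B wC rxw only_w.
have xB : x \in bicoloured E del c d by rewrite inE xE delx eqxx.
split=> // v vG; have vx : v != x by move: vG; rewrite !inE => /andP[].
suff eqC : (v \in kchain E del c d x) = (v \in kchain (E :\ x) gam c d v0).
  by rewrite /kswap eqC del_gam.
apply/idP/idP => [|vC].
  move/(kchain_min (S := x |: kchain (E :\ x) gam c d v0)).
  rewrite !inE (negbTE vx); apply=> [|u y uy]; first by rewrite eqxx.
  case/setU1P => [ux|uC].
    by move: uy; rewrite ux => /only_w [] ->; [apply: setU11 | apply: setU1r].
  have [-> | yx] := eqVneq y x; first exact: setU11.
  have ux := bicoloured_del_neq (kchain_bicoloured v0B uC).
  by apply/setU1r/(kchain_trans uC); rewrite -kempe_adj_del.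
have wB := kchain_bicoloured v0B wC.
have xw : kempe_adj E del c d x w.
  by rewrite /kempe_adj xB rxw (bicoloured_del (bicoloured_del_neq wB)) wB.
have symK := sym_connect_sym (kempe_adj_sym (E :\ x) gam c d).
move: wC vC; rewrite !inE symK => wv0 v0v.
exact: connect_trans (connect1 xw) (connect_kempe_del (connect_trans wv0 v0v)).
Qed.

End DeleteVertex.

Lemma kstep_recolour E t a x f : proper_col E t a -> x \in E -> 1 <= f <= t -> f != a x ->
  (forall v, v \in neighbours E x -> a v != f) ->
  [/\ kstep E t a (kswap E a (a x) f x), kswap E a (a x) f x x = f &
      forall v, v != x -> kswap E a (a x) f x v = a v].
Proof.
move=> [a_rng a_prop] xE ft fx free.
have xB : x \in bicoloured E a (a x) f by rewrite inE xE eqxx.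
have chx v : (v \in kchain E a (a x) f x) = (v == x).
  apply/idP/eqP => [|->]; last by rewrite inE connect0.
  move=> vC; apply/set1P; apply: (kchain_min (set11 x) _ vC).
  move=> u w /and3P[_ wB ruw] /set1P ux; subst u; apply/set1P/eqP/negPn/negP => wx.
  move: wB; rewrite inE => /andP[wE /orP[]/eqP awx].
    by move: (a_prop x w xE wE); rewrite eq_sym wx awx eqxx => /(_ isT ruw).
  by move: (free w); rewrite awx inE wE wx ruw eqxx => /(_ isT).
split=> [|//|v vx]; last by rewrite /kswap chx (negbTE vx).
  by exists (a x), f, x; split; rewrite // ?a_rng // eq_sym.
by rewrite /kswap chx !eqxx.
Qed.

Lemma colours_cover_injective (N : {set V}) a t c :
  #|N| < t -> 1 <= c <= t ->
  (forall f, 1 <= f <= t -> f != c -> exists2 v, v \in N & a v = f) ->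
  {in N &, injective a}.
Proof.
move=> ltNt ct cover v w vN wN avw; apply/eqP/negPn/negP => vw.
have sub : {subset rem c (iota 1 t) <= [seq a u | u <- enum (N :\ w)]}.
  move=> f; rewrite mem_rem_uniq ?iota_uniq // inE mem_iota add1n ltnS => /andP[fc ft].
  have [u uN <-] := cover f ft fc.
  have [uw|uw] := eqVneq u w; last by apply: map_f; rewrite mem_enum !inE uw uN.
  by rewrite uw -avw; apply: map_f; rewrite mem_enum !inE vw vN.
have := uniq_leq_size (rem_uniq c (iota_uniq 1 t)) sub.
rewrite size_map -cardE size_rem ?size_iota; last by rewrite mem_iota add1n ltnS.
by move: ltNt; rewrite (cardsD1 w N) wN; lia.
Qed.

Section LiftKstep.

Variables (E : {set V}) (x : V) (t : nat) (del gam : V -> nat).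
Hypotheses (xE : x \in E) (deg_x : #|neighbours E x| < t).
Hypotheses (del_proper : proper_col E t del) (del_gam : {in E :\ x, del =1 gam}).

Lemma lift_kstep_free c d v0 f :
  1 <= c <= t -> 1 <= d <= t -> c != d -> v0 \in bicoloured (E :\ x) gam c d ->
  del x = c -> 1 <= f <= t -> f != c -> f != d ->
  (forall v, v \in neighbours E x -> del v != f) ->
  exists del', clos_refl_trans _ (kstep E t) del del' /\
    {in E :\ x, del' =1 kswap (E :\ x) gam c d v0}.
Proof.
move=> ct dt cd v0B delx ft fc fd free.
have fx : f != del x by rewrite delx.
have [step1 del1x del1_off] := kstep_recolour del_proper xE ft fx free.
set del1 := kswap E del (del x) f x in step1 del1x del1_off.
have del1_gam : {in E :\ x, del1 =1 gam}.
  by move=> v vG; rewrite del1_off ?del_gam //; move: vG; rewrite !inE => /andP[].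
have avoid v : v \in kchain (E :\ x) gam c d v0 -> ~~ kempe_adj E del1 c d v x.
  by move=> _; apply/negP => /and3P[_ + _]; rewrite inE del1x (negbTE fc) (negbTE fd) andbF.
have [v0B1 swap_eq] := kswap_del_avoid del1_gam v0B avoid.
exists (kswap E del1 c d v0); split=> //.
by apply: rt_trans (rt_step _ _ _ _ step1) (rt_step _ _ _ _ _); exists c, d, v0.
Qed.

Lemma lift_kstep_forced c d v0 w :
  1 <= c <= t -> 1 <= d <= t -> c != d -> v0 \in bicoloured (E :\ x) gam c d ->
  del x = c -> w \in kchain (E :\ x) gam c d v0 -> kempe_adj E del c d w x ->
  (forall f, 1 <= f <= t -> f != c -> f != d -> exists2 v, v \in neighbours E x & del v = f) ->
  exists del', clos_refl_trans _ (kstep E t) del del' /\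
    {in E :\ x, del' =1 kswap (E :\ x) gam c d v0}.
Proof.
move=> ct dt cd v0B delx wC wx_adj nofree; have [_ del_prop] := del_proper.
have wB := kchain_bicoloured v0B wC; have wx := bicoloured_del_neq wB.
have wE : w \in E by move: wB; rewrite !inE => /andP[/andP[]].
have rxw : r x w by move: wx_adj => /and3P[_ _]; rewrite r_sym.
have delw : del w = d.
  move: wx_adj => /and3P[+ _ _]; rewrite inE => /andP[_ /orP[]/eqP //] delw.
  by move: (del_prop x w xE wE); rewrite eq_sym wx rxw delx delw eqxx => /(_ isT isT).
have inj : {in neighbours E x &, injective del}.
  apply: (colours_cover_injective deg_x ct) => f ft fc.
  have [-> | fd] := eqVneq f d; last exact: nofree.
  by exists w; rewrite // inE wE wx rxw.
have only_w v : kempe_adj E del c d x v -> v = x \/ v = w.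
  move=> /and3P[_ vB rxv]; have [-> | vx] := eqVneq v x; [by left | right].
  move: vB; rewrite inE => /andP[vE /orP[]/eqP delv].
    by move: (del_prop x v xE vE); rewrite eq_sym vx rxv delx delv eqxx => /(_ isT isT).
  by apply: inj; rewrite ?delv ?delw // !inE ?vE ?wE ?vx ?wx ?rxv.
have [xB swap_eq] := kswap_del_through del_gam xE delx v0B wC rxw only_w.
by exists (kswap E del c d x); split=> //; apply: rt_step; exists c, d, x.
Qed.

Lemma lift_kstep_touching c d v0 w :
  1 <= c <= t -> 1 <= d <= t -> c != d -> v0 \in bicoloured (E :\ x) gam c d ->
  del x = c -> w \in kchain (E :\ x) gam c d v0 -> kempe_adj E del c d w x ->
  exists del', clos_refl_trans _ (kstep E t) del del' /\
    {in E :\ x, del' =1 kswap (E :\ x) gam c d v0}.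
Proof.
move=> ct dt cd v0B delx wC wx_adj.
have [/hasP[f] | /hasPn nofree] :=
  boolP (has (fun f => [&& f != c, f != d & [forall v in neighbours E x, del v != f]]) (iota 1 t)).
  rewrite mem_iota add1n ltnS => ft /and3P[fc fd /forall_inP free].
  exact: lift_kstep_free ct dt cd v0B delx ft fc fd free.
apply: lift_kstep_forced ct dt cd v0B delx wC wx_adj _ => f ft fc fd.
move: (nofree f); rewrite mem_iota add1n ltnS ft fc fd /= => /(_ isT) /forall_inPn[v vN].
by rewrite negbK => /eqP; exists v.
Qed.

Lemma lift_kstep gam' : kstep (E :\ x) t gam gam' ->
  exists del', clos_refl_trans _ (kstep E t) del del' /\ {in E :\ x, del' =1 gam'}.
Proof.
move=> [c [d [v0 [ct dt cd v0B gam'_swap]]]].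
suff [del' [steps agree]] : exists del', clos_refl_trans _ (kstep E t) del del' /\
    {in E :\ x, del' =1 kswap (E :\ x) gam c d v0}.
  by exists del'; split=> // v vG; rewrite agree // gam'_swap.
have [/forall_inP avoid | /forall_inPn[w wC]] :=
  boolP [forall v in kchain (E :\ x) gam c d v0, ~~ kempe_adj E del c d v x].
  have [v0B' swap_eq] := kswap_del_avoid del_gam v0B avoid.
  by exists (kswap E del c d v0); split=> //; apply: rt_step; exists c, d, v0.
rewrite negbK => wx_adj; move: (wx_adj) => /and3P[_ + _].
rewrite inE => /andP[_ /orP[]/eqP delx]; first exact: lift_kstep_touching wC wx_adj.
have dc : d != c by rewrite eq_sym.
have v0B' : v0 \in bicoloured (E :\ x) gam d c by rewrite bicoloured_sym.
have wC' : w \in kchain (E :\ x) gam d c v0 by rewrite kchain_sym.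
have wx_adj' : kempe_adj E del d c w x by rewrite /kempe_adj bicoloured_sym.
have [del' [steps agree]] := lift_kstep_touching dt ct dc v0B' delx wC' wx_adj'.
by exists del'; split=> // v vG; rewrite agree // kswap_sym.
Qed.

End LiftKstep.

Lemma lift_ksteps E x t gam gam' : x \in E -> #|neighbours E x| < t ->
  clos_refl_trans _ (kstep (E :\ x) t) gam gam' ->
  forall del, proper_col E t del -> {in E :\ x, del =1 gam} ->
  exists del', clos_refl_trans _ (kstep E t) del del' /\ {in E :\ x, del' =1 gam'}.
Proof.
move=> xE deg_x; elim=> [g g' step|g|g g' g'' _ IH1 _ IH2] del del_proper del_g.
- exact: lift_kstep step.
- by exists del; split=> //; apply: rt_refl.
have [del1 [steps1 agree1]] := IH1 del del_proper del_g.
have [del2 [steps2 agree2]] := IH2 del1 (ksteps_proper steps1 del_proper) agree1.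
by exists del2; split=> //; apply: rt_trans steps1 steps2.
Qed.

Lemma kequiv_delete E x t a b : x \in E -> #|neighbours E x| < t ->
  proper_col E t a -> proper_col E t b -> kequiv (E :\ x) t a b -> kequiv E t a b.
Proof.
move=> xE deg_x pa pb [b' [steps b'b]].
have [a' [steps' a'b']] := lift_ksteps xE deg_x steps pa (fun _ _ => erefl).
have agree_off v : v \in E -> v != x -> a' v = b v.
  by move=> vE vx; rewrite a'b' ?b'b // !inE vx vE.
have [a'x | a'x] := eqVneq (a' x) (b x).
  by exists a'; split=> // v vE; have [-> | ] := eqVneq v x; last exact: agree_off.
have [b_rng b_prop] := pb.
have free v : v \in neighbours E x -> a' v != b x.
  by rewrite inE => /and3P[vE vx rxv]; rewrite agree_off //; apply: b_prop; rewrite // r_sym.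
have bx : b x != a' x by rewrite eq_sym.
have [step a''x a''_off] := kstep_recolour (ksteps_proper steps' pa) xE (b_rng x xE) bx free.
exists (kswap E a' (a' x) (b x) x); split; first exact: rt_trans steps' (rt_step _ _ _ _ step).
by move=> v vE; have [-> | vx] := eqVneq v x; rewrite ?a''x // a''_off // agree_off.
Qed.

Theorem kequiv_degenerate E0 k t : degenerate E0 k -> k < t ->
  forall a b, proper_col E0 t a -> proper_col E0 t b -> kequiv E0 t a b.
Proof.
move=> degE0 kt a b; suff ind E : E \subset E0 ->
  proper_col E t a -> proper_col E t b -> kequiv E t a b by apply: ind.
have [n] := ubnP #|E|; elim: n E => // n IH E ltEn sE pa pb.
have [-> | /(degE0 E sE)[x xE deg_x]] := eqVneq E set0.
  by exists a; split=> [|v]; [exact: rt_refl | rewrite inE].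
have sEx := subD1set E x.
apply: (kequiv_delete xE (leq_ltn_trans deg_x kt) pa pb).
apply: IH (proper_col_sub sEx pa) (proper_col_sub sEx pb); last exact: subset_trans sEx sE.
by move: ltEn; rewrite (cardsD1 x E) xE.
Qed.

End KempeChains.

Section ChordlessGraphs.

Variables (T : finType) (g : rel T).

Lemma chordless_subrel (e : rel T) : subrel g e -> chordless e -> chordless g.
Proof.
move=> ge che s us ss cs x y xs ys gxy.
exact: che us ss (sub_cycle ge cs) x y xs ys (ge _ _ gxy).
Qed.

Hypotheses (g_sym : symmetric g) (g_irr : irreflexive g) (g_chordless : chordless g).

Lemma chordless_cycle_chord y q z w :
  uniq (y :: rcons q z) -> path g y (rcons q z) -> g z y -> w \in q -> g y w ->
  w = head z q.
Proof.
move=> us pth gzy wq gyw; set s := y :: rcons q z.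
have ss : 3 <= size s by rewrite /= size_rcons; case: (q) wq.
have cs : cycle g s by rewrite /s /= rcons_path pth last_rcons.
have ws : w \in s by rewrite /s !inE mem_rcons !inE wq !orbT.
case/orP: (g_chordless us ss cs (mem_head y _) ws gyw) => /eqP.
  by move=> ->; rewrite next_nth mem_head /= eqxx; case: (q) wq.
move=> yw; have := prev_next us w; rewrite -yw prev_nth mem_head.
move: us; rewrite /= rcons_uniq => /andP[yn /andP[zq _]].
rewrite (memNindex yn) size_rcons /= nth_rcons ltnn eqxx => wz.
by move: zq; rewrite wz wq.
Qed.

Lemma chordless_path_degree y p : uniq (y :: p) -> path g y p -> count (g y) p <= 2.
Proof.
elim/last_ind: p => [//|q z IH] up pth.
have /andP[yq uq] : (y \notin q) && uniq q.
  by move: up; rewrite /= rcons_uniq mem_rcons inE negb_or => /andP[/andP[_ ->] /andP[_ ->]].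
rewrite -cats1 count_cat /= addn0.
have [gyz|_] := boolP (g y z).
  suff : count (g y) q <= 1 by rewrite addn1.
  have head_only w : w \in q -> g y w -> w = head z q.
    by apply: chordless_cycle_chord; rewrite // g_sym.
  rewrite -size_filter; apply: (@uniq_leq_size _ _ [:: head z q]); first exact: filter_uniq.
  by move=> w; rewrite mem_filter inE => /andP[gyw wq]; apply/eqP/head_only.
by rewrite addn0 IH ?cons_uniq ?yq //; move: pth; rewrite rcons_path => /andP[].
Qed.

Lemma exists_maximal_path u w : g u w ->
  exists y p, [/\ uniq (y :: p), path g y p, p != [::] & forall v, g y v -> v \in p].
Proof.
move=> guw; pose P n := [exists y, exists p : n.-tuple T, uniq (y :: p) && path g y p].
have P1 : P 1.
  apply/existsP; exists u; apply/existsP; exists [tuple w].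
  by rewrite /= inE guw !andbT; apply: contraTneq guw => ->; rewrite g_irr.
have Pbound n : P n -> n <= #|T|.
  case/existsP => y /existsP[p /andP[up _]]; rewrite -(size_tuple p).
  apply: leq_trans (leqnSn _) _; rewrite -[(size p).+1]/(size (y :: p)).
  by rewrite -(card_uniqP up) max_card.
case: (ex_maxnP (ex_intro _ 1 P1) Pbound) => n /existsP[y /existsP[p /andP[up pth]]] n_max.
exists y, p; split=> //.
  by rewrite -size_eq0 size_tuple -lt0n (n_max 1 P1).
move=> v gyv; apply: contraT => vp.
have : P n.+1.
  apply/existsP; exists v; apply/existsP; exists [tuple of y :: p].
  move: up; rewrite cons_uniq => /andP[yp up].
  rewrite /= g_sym gyv pth inE negb_or vp yp up !andbT.
  by apply: contraTneq gyv => ->; rewrite g_irr.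
by move/n_max; rewrite ltnn.
Qed.

Lemma chordless_low_degree u w : g u w -> exists y z, g y z /\ #|[set v | g y v]| <= 2.
Proof.
move=> guw; have [y [p [up pth p_ne nbrs]]] := exists_maximal_path guw.
exists y, (head y p); split; first by case: p p_ne pth {up nbrs} => //= v p _ /andP[].
apply: leq_trans (chordless_path_degree up pth).
rewrite -size_filter cardE; apply: uniq_leq_size (enum_uniq _) _ => v.
by rewrite mem_enum inE mem_filter => gyv; rewrite gyv nbrs.
Qed.

End ChordlessGraphs.

Section LineGraph.

Variables (T : finType) (e : rel T).
Hypothesis e_simple : simple_graph e.

Definition line_adj (A B : {set T}) : bool := A :&: B != set0.

Lemma edgesP A : reflect (exists x y, e x y /\ A = [set x; y]) (A \in edges e).
Proof.
rewrite inE; apply: (iffP existsP) => [[x /existsP[y /andP[exy /eqP ->]]]|[x [y [exy ->]]]].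
  by exists x, y.
by exists x; apply/existsP; exists y; rewrite exy eqxx.
Qed.

Lemma in_edges_set2 u w : ([set u; w] \in edges e) = e u w.
Proof.
have [e_sym e_irr] := e_simple.
apply/edgesP/idP => [[x [y [exy /setP uw_xy]]]|euw]; last by exists u, w.
have xuw : x \in [set u; w] by rewrite uw_xy set21.
have yuw : y \in [set u; w] by rewrite uw_xy set22.
by case/set2P: xuw yuw exy => -> /set2P[]->; rewrite ?e_irr // e_sym.
Qed.

Lemma card_edges_at (E : {set {set T}}) u : E \subset edges e ->
  #|[set A in E | u \in A]| <= #|[set w | [set u; w] \in E]|.
Proof.
move=> sE; apply: leq_trans (leq_imset_card (fun w => [set u; w]) _).
apply/subset_leq_card/subsetP => A; rewrite inE => /andP[AE uA].
have /edgesP[x [y [_ Axy]]] := subsetP sE A AE.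
move: uA AE; rewrite Axy => /set2P[]-> xyE; apply/imsetP.
  by exists y; rewrite ?inE.
by exists x; rewrite ?inE setUC.
Qed.

Lemma card_adj_le_maxdeg (h : rel T) u : subrel h e -> #|[set w | h u w]| <= maxdeg e.
Proof.
move=> he; apply: leq_trans (leq_bigmax (F := fun v => #|[set w | e v w]|) u).
by apply/subset_leq_card/subsetP => w; rewrite !inE => /he.
Qed.

Lemma line_graph_degenerate : chordless e -> degenerate line_adj (edges e) (maxdeg e).
Proof.
move=> che E sE /set0Pn[A AE]; have [_ e_irr] := e_simple.
pose g u w := [set u; w] \in E.
have ge : subrel g e by move=> u w guw; rewrite -in_edges_set2 (subsetP sE).
have g_sym : symmetric g by move=> u w; rewrite /g setUC.
have g_irr : irreflexive g by move=> u; apply/negP => /ge; rewrite e_irr.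
have /edgesP[p [q [_ Apq]]] := subsetP sE A AE.
have gpq : g p q by rewrite /g -Apq.
have [y [z [gyz deg_y]]] := chordless_low_degree g_sym g_irr (chordless_subrel ge che) gpq.
exists [set y; z] => //; set x := [set y; z].
pose at_ u := [set B in E | u \in B].
have sub : neighbours line_adj E x \subset (at_ y :\ x) :|: (at_ z :\ x).
  apply/subsetP => B; rewrite !inE => /and3P[BE Bx /set0Pn[v]].
  by rewrite !inE => /andP[/orP[]/eqP-> vB]; rewrite Bx BE vB ?orbT.
have at_y : #|at_ y| <= 2 := leq_trans (card_edges_at y sE) deg_y.
have at_z : #|at_ z| <= maxdeg e.
  exact: leq_trans (card_edges_at z sE) (card_adj_le_maxdeg z ge).
have := cardsD1 x (at_ y); have := cardsD1 x (at_ z).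
have xE : x \in E := gyz.
rewrite !inE xE !eqxx orbT => cz cy.
apply: leq_trans (subset_leq_card sub) _; rewrite cardsU; lia.
Qed.

End LineGraph.

Theorem corollary1p4 (T : finType) (e : rel T) :
  simple_graph e -> chordless e -> 3 <= maxdeg e ->
  forall a b : {set T} -> nat,
    proper_coloring e (maxdeg e).+1 a ->
    proper_coloring e (maxdeg e).+1 b ->
    K_equivalent e (maxdeg e).+1 a b.
Proof.
move=> e_simple e_chordless _ a b pa pb.
have line_sym : symmetric (@line_adj T) by move=> A B; rewrite /line_adj setIC.
exact: (kequiv_degenerate line_sym (line_graph_degenerate e_simple e_chordless) (ltnSn _) pa pb).
Qed.
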